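(* Let $d\ge 2$. If the graph of a stacked $(d+1)$-polytope is $d$-ball packable, then its $d$-ball packing $\mathcal S$ is stress-free: the only function $T$ on the edges of the tangency graph $G(\mathcal S)$ satisfying $\sum_{j:\,S_iS_j\in E(G(\mathcal S))}T(S_iS_j)(\mathbf v_j-\mathbf v_i)=0$ for every ball $S_i\in\mathcal S$ is $T\equiv 0$.
   Context: A stacked polytope is one obtained from a simplex by repeatedly gluing a new simplex onto a facet. A $d$-ball in $\hat{\mathbb R}^d$ is a closed ball, closed exterior of an open ball with $\infty$, or a closed half-space with $\infty$; a $d$-ball packing is a collection of $d$-balls with disjoint interiors; its tangency graph joins balls meeting in exactly one point; a graph is $d$-ball packable if isomorphic to the tangency graph of some $d$-ball packing. The vectors $\mathbf v_i$ are defined as follows: map the packing by stereographic projection (after a Möbius transformation if necessary) to a packing of spherical caps on $\mathbb S^d\subset\mathbb R^{d+1}$, each of spherical radius $\theta_i<\pi/2$ with center $\mathbf c_i$; then $\mathbf v_i=\mathbf c_i/\cos\theta_i$ is the polar vertex of the cap corresponding to $S_i$ (the point with $\partial C_i=\mathbb S^d\cap\{x:\langle x,\mathbf v_i\rangle=1\}$). *)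

From mathcomp Require Import all_boot.
From Stdlib Require Import Reals.
Set Implicit Arguments. Unset Strict Implicit. Unset Printing Implicit Defensive.

Definition dotp {m : nat} (x y : 'I_m -> R) : R :=
  \big[Rplus/0%R]_(k < m) (x k * y k)%R.

Definition vsub {m : nat} (x y : 'I_m -> R) : 'I_m -> R := fun k => (x k - y k)%R.

Definition on_sphere (d : nat) (x : 'I_d.+1 -> R) : Prop := dotp x x = 1%R.

(* None is the point at infinity *)
Definition hpoint (d : nat) := option ('I_d -> R).

(* d-balls of \hat R^d:
   BClosed a r : closed ball {x : |x - a| <= r}
   BExt a r    : closed exterior {x : |x - a| >= r} of the open ball, together with oo
   BHalf u b   : closed half-space {x : <x,u> >= b}, together with oo *)
Inductive hball (d : nat) : Type :=
| BClosed of ('I_d -> R) & R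
| BExt of ('I_d -> R) & R
| BHalf of ('I_d -> R) & R.

Definition valid_ball (d : nat) (B : hball d) : Prop :=
  match B with
  | BClosed _ r => (0 < r)%R
  | BExt _ r => (0 < r)%R
  | BHalf u _ => exists k, u k <> 0%R
  end.

Definition in_ball (d : nat) (B : hball d) (p : hpoint d) : Prop :=
  match B, p with
  | BClosed a r, Some x => (dotp (vsub x a) (vsub x a) <= r * r)%R
  | BClosed _ _, None => False
  | BExt a r, Some x => (r * r <= dotp (vsub x a) (vsub x a))%R
  | BExt _ _, None => True
  | BHalf u b, Some x => (b <= dotp x u)%R
  | BHalf _ _, None => True
  end.

Definition in_interior (d : nat) (B : hball d) (p : hpoint d) : Prop :=
  match B, p with
  | BClosed a r, Some x => (dotp (vsub x a) (vsub x a) < r * r)%R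
  | BClosed _ _, None => False
  | BExt a r, Some x => (r * r < dotp (vsub x a) (vsub x a))%R
  | BExt _ _, None => True
  | BHalf u b, Some x => (b < dotp x u)%R
  | BHalf _ _, None => False
  end.

Definition is_packing (d n : nat) (B : 'I_n -> hball d) : Prop :=
  (forall i, valid_ball (B i)) /\
  (forall i j, i <> j -> ~ (exists p, in_interior (B i) p /\ in_interior (B j) p)).

Definition tangent (d n : nat) (B : 'I_n -> hball d) (i j : 'I_n) : Prop :=
  i <> j /\ exists! p : hpoint d, in_ball (B i) p /\ in_ball (B j) p.

Definition stereo (d : nat) (p : hpoint d) : 'I_d.+1 -> R :=
  match p with
  | None => fun k => match unlift ord_max k with Some _ => 0%R | None => 1%R end
  | Some x => fun k =>
      let s := dotp x x in
      match unlift ord_max k with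
      | Some k' => (2 * x k' / (1 + s))%R
      | None => ((s - 1) / (s + 1))%R
      end
  end.

Definition in_cap (d : nat) (c : 'I_d.+1 -> R) (theta : R) (y : 'I_d.+1 -> R) : Prop :=
  on_sphere y /\ (cos theta <= dotp y c)%R.

Definition cap_of_ball (d : nat) (B : hball d) (c : 'I_d.+1 -> R) (theta : R) : Prop :=
  forall y, in_cap c theta y <-> exists p, in_ball B p /\ y = stereo p.

Definition polar_vertex (d : nat) (c : 'I_d.+1 -> R) (theta : R) : 'I_d.+1 -> R :=
  fun k => (c k / cos theta)%R.

(* stacked_graph k n Fs adj : starting from a k-simplex on vertices 0..k,
   repeatedly glue a new simplex onto a facet; vertices are 0..n-1, Fs is the
   current list of facets (each a list of k vertices), adj the graph. *)
Inductive stacked_graph (k : nat) : nat -> seq (seq nat) -> (nat -> nat -> Prop) -> Prop :=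
| stacked_simplex :
    stacked_graph k k.+1
      [seq [seq i <- iota 0 k.+1 | i != j] | j <- iota 0 k.+1]
      (fun i j => i <> j /\ (i <= k)%N /\ (j <= k)%N)
| stacked_glue n Fs adj f :
    stacked_graph k n Fs adj -> f \in Fs ->
    stacked_graph k n.+1
      (rem f Fs ++ [seq n :: rem u f | u <- f])
      (fun i j => adj i j \/ (i = n /\ j \in f) \/ (j = n /\ i \in f)).

(* Let v_i be the polar vertex of the i-th cap and t_i := tan(theta_i) > 0.
   The proof has a geometric half and a combinatorial half.

   Two caps of acute radii theta, theta' on the sphere S^d (d >= 1)
   that meet in exactly one point have centres at angle theta + theta', i.e.
   <c,c'> = cos(theta + theta').  Since stereographic projection is injective,
   tangent balls give such caps, and therefore the polar vertices satisfy the
   Gram relations |v_i|^2 = 1 + t_i^2 and <v_i,v_j> = 1 - t_i t_j (i ~ j).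

   If the neighbours of a ball i carrying a nonzero stress are
   pairwise tangent, pairing the equilibrium at i with v_i and with each such
   neighbour v_l forces T(i,l) t_l to be a constant S with S = -t_i sum_l T(i,l);
   then sum_l T(i,l)^2 t_l = -t_i (sum_l T(i,l))^2 <= 0, so T(i,.) = 0.

   Combinatorics. In a stacked graph the last added vertex has a clique as
   neighbourhood; peeling vertices off one at a time, the local vanishing
   lemma kills the stress on every edge. *)

From HB Require Import structures.
From mathcomp Require Import all_boot.
From Stdlib Require Import Reals Lra Psatz FunctionalExtensionality.
Set Warnings "-notation-overridden,-redundant-canonical-projection".
Set Implicit Arguments. Unset Strict Implicit.
Open Scope R_scope.

HB.instance Definition _ := Monoid.isComLaw.Build R 0%R Rplus
  (fun x y z => esym (Rplus_assoc x y z)) Rplus_comm Rplus_0_l.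

Lemma rsumD n (F G : 'I_n -> R) :
  \big[Rplus/0]_(i < n) (F i + G i) = \big[Rplus/0]_(i < n) F i + \big[Rplus/0]_(i < n) G i.
Proof. exact: big_split. Qed.

Lemma rsumZ n c (F : 'I_n -> R) : \big[Rplus/0]_(i < n) (c * F i) = c * \big[Rplus/0]_(i < n) F i.
Proof. by symmetry; apply: (big_morph (fun x => c * x)) => [x y|]; ring. Qed.

Lemma rsum_ge0 n (F : 'I_n -> R) : (forall i, 0 <= F i) -> 0 <= \big[Rplus/0]_(i < n) F i.
Proof. by move=> F_ge0; apply: big_ind => [|x y|i _]; [lra|lra|]. Qed.

Lemma rsum_delta n (k : 'I_n) (F : 'I_n -> R) :
  \big[Rplus/0]_(i < n) (if i == k then F i else 0) = F k.
Proof. by rewrite (bigD1 k) //= eqxx big1 ?Rplus_0_r // => i /negbTE ->. Qed.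

Lemma rsum_term_le n (k : 'I_n) (F : 'I_n -> R) : (forall i, 0 <= F i) ->
  F k <= \big[Rplus/0]_(i < n) F i.
Proof.
move=> F_ge0; rewrite (bigD1 k) //= -{1}(Rplus_0_r (F k)).
by apply: Rplus_le_compat_l; apply: big_ind => [|x y|i _]; [lra|lra|].
Qed.

Lemma rsum_two_le n (k l : 'I_n) (F : 'I_n -> R) : k != l -> (forall i, 0 <= F i) ->
  F k + F l <= \big[Rplus/0]_(i < n) F i.
Proof.
move=> kl F_ge0; rewrite (bigD1 k) //= (bigD1 l) /=; last by rewrite eq_sym.
rewrite -Rplus_assoc -{1}(Rplus_0_r (F k + F l)).
by apply: Rplus_le_compat_l; apply: big_ind => [|x y|i _]; [lra|lra|].
Qed.

Lemma dotpC m (x y : 'I_m -> R) : dotp x y = dotp y x.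
Proof. by apply: eq_bigr => k _; ring. Qed.

Lemma dotp_linl m a b (x y z : 'I_m -> R) :
  dotp (fun k => a * x k + b * y k) z = a * dotp x z + b * dotp y z.
Proof. by rewrite /dotp -!rsumZ -rsumD; apply: eq_bigr => k _; ring. Qed.

Lemma dotp_linr m a b (x y z : 'I_m -> R) :
  dotp x (fun k => a * y k + b * z k) = a * dotp x y + b * dotp x z.
Proof. by rewrite dotpC dotp_linl (dotpC y) (dotpC z). Qed.

Lemma dotp_scalel m a (x z : 'I_m -> R) : dotp (fun k => a * x k) z = a * dotp x z.
Proof. by rewrite /dotp -rsumZ; apply: eq_bigr => k _; ring. Qed.

Lemma dotp_ge0 m (x : 'I_m -> R) : 0 <= dotp x x.
Proof. by apply: rsum_ge0 => k; nra. Qed.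

Lemma dotp_eq0 m (x : 'I_m -> R) : dotp x x = 0 -> forall k, x k = 0.
Proof.
move=> x0 k; have := @rsum_term_le _ k (fun i => x i * x i) (fun i => ltac:(nra)).
by rewrite -/(dotp x x) x0; nra.
Qed.

Lemma cauchy_schwarz m (x y : 'I_m -> R) : dotp x y * dotp x y <= dotp x x * dotp y y.
Proof.
have [y0|y_pos] : dotp y y = 0 \/ 0 < dotp y y by have := dotp_ge0 y; lra.
  have -> : dotp x y = 0 by rewrite /dotp big1 // => k _; rewrite (dotp_eq0 y0 k); ring.
  by rewrite y0; lra.
(* 0 <= |<y,y> x - <x,y> y|^2 = <y,y> (<x,x><y,y> - <x,y>^2) *)
have := dotp_ge0 (fun k => dotp y y * x k + (- dotp x y) * y k).
rewrite dotp_linl !dotp_linr (dotpC y x); nra.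
Qed.

Lemma unit_dotp_bound m (x y : 'I_m -> R) : dotp x x = 1 -> dotp y y = 1 ->
  -1 <= dotp x y <= 1.
Proof. move=> x1 y1; have := cauchy_schwarz x y; rewrite x1 y1; nra. Qed.

Definition normalize m (y : 'I_m -> R) : 'I_m -> R := fun k => / sqrt (dotp y y) * y k.

Lemma dotp_normalize m (y z : 'I_m -> R) :
  dotp (normalize y) z = dotp y z / sqrt (dotp y y).
Proof. by rewrite /normalize dotp_scalel /Rdiv Rmult_comm. Qed.

Lemma normalize_unit m (y : 'I_m -> R) : 0 < dotp y y -> dotp (normalize y) (normalize y) = 1.
Proof.
move=> y_pos; rewrite dotp_normalize dotpC dotp_normalize.
have := sqrt_lt_R0 _ y_pos; have := sqrt_sqrt _ (Rlt_le _ _ y_pos).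
by move: (sqrt _) => s ss s_pos; rewrite -{1}ss; field; lra.
Qed.

(* In dimension at least 2 every unit vector has a unit vector orthogonal to it:
   normalize e_k - z_k z for a coordinate k with z_k^2 < 1. *)
Lemma orthogonal_unit (m : nat) (m_ge2 : (1 < m)%nat) (z : 'I_m -> R) : dotp z z = 1 ->
  exists e, dotp e e = 1 /\ dotp e z = 0.
Proof.
move=> z1; have [k zk_small] : exists k : 'I_m, z k * z k < 1.
  have m_pos : (0 < m)%nat by apply: ltn_trans m_ge2.
  have := @rsum_two_le m (Ordinal m_pos) (Ordinal m_ge2) (fun i => z i * z i) isT
    (fun i => ltac:(nra)).
  rewrite -/(dotp z z) z1 => two_le.
  case: (Rlt_le_dec (z (Ordinal m_pos) * z (Ordinal m_pos)) 1) => small; first by exists (Ordinal m_pos).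
  by exists (Ordinal m_ge2); nra.
pose ek : 'I_m -> R := fun j => if j == k then 1 else 0.
have dotp_ek x : dotp ek x = x k.
  rewrite /dotp -(rsum_delta k x); apply: eq_bigr => j _; rewrite /ek.
  by case: (j == k); ring.
pose e := fun j => 1 * ek j + (- z k) * z j.
have e_orth : dotp e z = 0 by rewrite /e dotp_linl dotp_ek z1; ring.
have e_norm : dotp e e = 1 - z k * z k.
  by rewrite {1}/e dotp_linl dotp_ek (dotpC z) e_orth /e /ek eqxx; ring.
exists (normalize e); split; first by apply: normalize_unit; lra.
by rewrite dotp_normalize e_orth /Rdiv Rmult_0_l.
Qed.

Definition tilt m (y e : 'I_m -> R) (r : R) : 'I_m -> R :=
  fun k => sqrt (1 - r * r) * y k + r * e k.

Section Tilt.
Variables (m : nat) (y e : 'I_m -> R) (r : R).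
Hypotheses (y_unit : dotp y y = 1) (e_unit : dotp e e = 1) (e_orth : dotp e y = 0).
Hypothesis r_range : 0 < r < 1.

Let s_sq : sqrt (1 - r * r) * sqrt (1 - r * r) = 1 - r * r.
Proof. by apply: sqrt_sqrt; nra. Qed.

Lemma tilt_unit : dotp (tilt y e r) (tilt y e r) = 1.
Proof. by rewrite /tilt dotp_linl !dotp_linr y_unit e_unit (dotpC y e) e_orth; nra. Qed.

Lemma tilt_moves : tilt y e r <> y.
Proof.
move=> tilt_y; have := f_equal (dotp^~ e) tilt_y.
by rewrite /tilt dotp_linl e_unit (dotpC y e) e_orth; lra.
Qed.

Lemma tilt_dotp_ge (z : 'I_m -> R) : dotp z z = 1 -> 0 <= dotp y z ->
  dotp y z - 2 * r <= dotp (tilt y e r) z.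
Proof.
move=> z_unit yz_ge0; rewrite /tilt dotp_linl.
have [ez_lb _] := unit_dotp_bound e_unit z_unit.
have [_ yz_ub] := unit_dotp_bound y_unit z_unit.
have s_ge : 1 - r <= sqrt (1 - r * r) by have := sqrt_pos (1 - r * r); nra.
have : (1 - r) * dotp y z <= sqrt (1 - r * r) * dotp y z by apply: Rmult_le_compat_r.
have : r * -1 <= r * dotp e z by apply: Rmult_le_compat_l; lra.
nra.
Qed.
End Tilt.

Lemma acute_cos_sin theta : 0 < theta < PI / 2 ->
  0 < cos theta /\ 0 < sin theta /\ cos theta * cos theta + sin theta * sin theta = 1.
Proof.
move=> theta_range; split; first by apply: cos_gt_0; lra.
split; first by apply: sin_gt_0; have := PI_RGT_0; lra.
by have := sin2_cos2 theta; rewrite /Rsqr; lra.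
Qed.

Lemma ge_neg_of_sq_le X C : 0 <= C -> X * X <= C * C -> - C <= X.
Proof. by move=> C_ge0 sq_le; nra. Qed.

Lemma lt_div_sqrt a p N : 0 <= a -> 0 < p -> 0 < N -> a * a * N < p * p ->
  a < p / sqrt N.
Proof.
move=> a_ge0 p_pos N_pos sq_lt.
have sN_pos := sqrt_lt_R0 _ N_pos; have sN_sq := sqrt_sqrt _ (Rlt_le _ _ N_pos).
apply: (Rmult_lt_reg_r (sqrt N)) => //.
have -> : p / sqrt N * sqrt N = p by field; lra.
nra.
Qed.

(* Two caps {y | <y,u> >= a} and {y | <y,w> >= b} on the unit sphere, with
   a = cos(alpha), sa = sin(alpha), b = cos(beta), sb = sin(beta) for acute
   angles alpha, beta.  If the caps touch (meet in exactly one point), the angle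
   between the centres is alpha + beta, i.e. <u,w> = cos(alpha + beta). *)
Section TouchingCaps.
Variables (m : nat) (u w : 'I_m -> R) (a sa b sb : R).
Hypotheses (u_unit : dotp u u = 1) (w_unit : dotp w w = 1).
Hypotheses (a_pos : 0 < a) (sa_pos : 0 < sa) (b_pos : 0 < b) (sb_pos : 0 < sb).
Hypotheses (a_circle : a * a + sa * sa = 1) (b_circle : b * b + sb * sb = 1).

Lemma common_point_centres_close y : dotp y y = 1 -> a <= dotp y u -> b <= dotp y w ->
  a * b - sa * sb <= dotp u w.
Proof.
move=> y_unit; move Ep : (dotp y u) => p; move Eq : (dotp y w) => q p_ge q_ge.
have [_ p_le1] := unit_dotp_bound y_unit u_unit; rewrite Ep in p_le1.
have [_ q_le1] := unit_dotp_bound y_unit w_unit; rewrite Eq in q_le1.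
(* project u and w onto the tangent space of the sphere at y *)
pose u' := fun k => 1 * u k + (- p) * y k.
pose w' := fun k => 1 * w k + (- q) * y k.
have u'w' : dotp u' w' = dotp u w - p * q.
  by rewrite /u' /w' dotp_linl !dotp_linr (dotpC u y) y_unit Ep Eq; ring.
have u'u' : dotp u' u' = 1 - p * p.
  by rewrite /u' dotp_linl !dotp_linr (dotpC u y) y_unit u_unit Ep; ring.
have w'w' : dotp w' w' = 1 - q * q.
  by rewrite /w' dotp_linl !dotp_linr (dotpC w y) y_unit w_unit Eq; ring.
have CS := cauchy_schwarz u' w'; rewrite u'w' u'u' w'w' in CS.
have tangent_dotp : - (sa * sb) <= dotp u w - p * q.
  apply: ge_neg_of_sq_le; first by nra.
  apply: Rle_trans CS _.
  have : 0 <= 1 - p * p <= sa * sa by nra.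
  have : 0 <= 1 - q * q <= sb * sb by nra.
  nra.
by nra.
Qed.

(* Conversely, if the centres are at angle less than alpha + beta, a suitable
   point of the great circle through u and w lies in the interior of both caps. *)
Lemma centres_close_interior_point : a * b - sa * sb < dotp u w ->
  exists y, dotp y y = 1 /\ a < dotp y u /\ b < dotp y w.
Proof.
move Eg : (dotp u w) => g g_gt.
pose yv := fun k => sb * u k + sa * w k.
have yv_u : dotp yv u = sb + sa * g by rewrite /yv dotp_linl u_unit (dotpC w u) Eg; ring.
have yv_w : dotp yv w = sa + sb * g by rewrite /yv dotp_linl w_unit Eg; ring.
have yv_yv : dotp yv yv = sb * sb + sa * sa + 2 * sa * sb * g.
  by rewrite {1}/yv dotp_linl (dotpC u) (dotpC w) yv_u yv_w; ring.
have yv_u_pos : 0 < sb + sa * g.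
  have : sa * (a * b - sa * sb) < sa * g by apply: Rmult_lt_compat_l.
  have : 0 < a * (a * sb + sa * b) by apply: Rmult_lt_0_compat; nra.
  have : sb * (a * a + sa * sa) = sb by rewrite a_circle; ring.
  by nra.
have yv_w_pos : 0 < sa + sb * g.
  have : sb * (a * b - sa * sb) < sb * g by apply: Rmult_lt_compat_l.
  have : 0 < b * (b * sa + sb * a) by apply: Rmult_lt_0_compat; nra.
  have : sa * (b * b + sb * sb) = sa by rewrite b_circle; ring.
  by nra.
have yv_pos : 0 < dotp yv yv.
  by have := cauchy_schwarz yv u; rewrite yv_u u_unit; nra.
(* (g + sa sb)^2 > (ab)^2, which controls both squared inner products *)
have gap : 0 < (g + sa * sb) * (g + sa * sb) - a * a * (b * b).
  have ab_pos : 0 < a * b by apply: Rmult_lt_0_compat.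
  have : a * b < g + sa * sb by lra.
  by nra.
have a_sq : a * a = 1 - sa * sa by lra.
have b_sq : b * b = 1 - sb * sb by lra.
exists (normalize yv); split; first exact: normalize_unit.
rewrite !dotp_normalize yv_u yv_w; split; apply: lt_div_sqrt; rewrite ?yv_yv; try lra.
- have : (sb + sa * g) * (sb + sa * g) - a * a * (sb * sb + sa * sa + 2 * sa * sb * g)
       = sa * sa * ((g + sa * sb) * (g + sa * sb) - a * a * (b * b)).
    by rewrite a_sq b_sq; ring.
  by have := Rmult_lt_0_compat (sa * sa) _ ltac:(nra) gap; lra.
- have : (sa + sb * g) * (sa + sb * g) - b * b * (sb * sb + sa * sa + 2 * sa * sb * g)
       = sb * sb * ((g + sa * sb) * (g + sa * sb) - a * a * (b * b)).
    by rewrite a_sq b_sq; ring.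
  by have := Rmult_lt_0_compat (sb * sb) _ ltac:(nra) gap; lra.
Qed.

(* A common interior point is never the only common point (in dimension >= 2):
   it can be tilted slightly while staying in both caps. *)
Lemma interior_point_not_unique (m_ge2 : (1 < m)%nat) y :
  dotp y y = 1 -> a < dotp y u -> b < dotp y w ->
  exists y', y' <> y /\ dotp y' y' = 1 /\ a <= dotp y' u /\ b <= dotp y' w.
Proof.
move=> y_unit yu_gt yw_gt.
have [e [e_unit e_orth]] := orthogonal_unit m_ge2 y_unit.
have [_ yu_le1] := unit_dotp_bound y_unit u_unit.
have [_ yw_le1] := unit_dotp_bound y_unit w_unit.
pose r := Rmin ((dotp y u - a) / 2) ((dotp y w - b) / 2).
have r_le_u : r <= (dotp y u - a) / 2 by apply: Rmin_l.
have r_le_w : r <= (dotp y w - b) / 2 by apply: Rmin_r.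
have r_range : 0 < r < 1 by split; [apply: Rmin_glb_lt; lra | lra].
exists (tilt y e r); split; first exact: tilt_moves.
split; first exact: tilt_unit.
have := tilt_dotp_ge y_unit e_unit r_range u_unit ltac:(lra).
have := tilt_dotp_ge y_unit e_unit r_range w_unit ltac:(lra).
lra.
Qed.

Lemma touching_caps_centres (m_ge2 : (1 < m)%nat) :
  (exists y, dotp y y = 1 /\ a <= dotp y u /\ b <= dotp y w) ->
  (forall y y', dotp y y = 1 -> a <= dotp y u -> b <= dotp y w ->
     dotp y' y' = 1 -> a <= dotp y' u -> b <= dotp y' w -> y = y') ->
  dotp u w = a * b - sa * sb.
Proof.
move=> [y0 [y0_unit [y0_u y0_w]]] unique_point.
case: (Rle_lt_or_eq_dec _ _ (common_point_centres_close y0_unit y0_u y0_w)) => // close.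
have [y [y_unit [yu yw]]] := centres_close_interior_point close.
have [y' [y'_ne [y'_unit [y'u y'w]]]] := interior_point_not_unique m_ge2 y_unit yu yw.
by case: y'_ne; apply: unique_point => //; lra.
Qed.
End TouchingCaps.

Lemma touching_caps_angle d (d_pos : (0 < d)%nat) (c1 c2 : 'I_d.+1 -> R) theta1 theta2 :
  on_sphere c1 -> on_sphere c2 ->
  0 < theta1 < PI / 2 -> 0 < theta2 < PI / 2 ->
  (exists y, in_cap c1 theta1 y /\ in_cap c2 theta2 y) ->
  (forall y y', in_cap c1 theta1 y -> in_cap c2 theta2 y ->
     in_cap c1 theta1 y' -> in_cap c2 theta2 y' -> y = y') ->
  dotp c1 c2 = cos (theta1 + theta2).
Proof.
move=> c1_unit c2_unit /acute_cos_sin [cos1 [sin1 circle1]] /acute_cos_sin [cos2 [sin2 circle2]].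
move=> [y0 [[y0_unit y0_1] [_ y0_2]]] unique_point.
rewrite cos_plus; apply: touching_caps_centres => //.
- by exists y0.
- by move=> y y' y1 yc1 yc2 y'1 y'c1 y'c2; apply: unique_point.
Qed.

Lemma div_eq_cross x y a b : a <> 0 -> b <> 0 -> x / a = y / b -> x * b = y * a.
Proof.
move=> a_ne0 b_ne0 E; have -> : x = x / a * a by field.
by rewrite E; field.
Qed.

(* Stereographic projection is injective: the last coordinate (s-1)/(s+1),
   s = |x|^2, separates oo from finite points and determines |x|^2, and then the
   other coordinates 2x/(1+s) determine x. *)
Lemma stereo_inj d : injective (@stereo d).
Proof.
have ratio_inj s1 s2 : 0 <= s1 -> 0 <= s2 -> (s1 - 1) / (s1 + 1) = (s2 - 1) / (s2 + 1) ->
    s1 = s2.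
  move=> s1_ge0 s2_ge0 /div_eq_cross; lra.
have ratio_ne1 s : 0 <= s -> (s - 1) / (s + 1) <> 1.
  move=> s_ge0 E; have : (s - 1) * 1 = 1 * (s + 1) by apply: div_eq_cross; rewrite ?E ?Rdiv_1_r; lra.
  lra.
move=> p q E; have E_last := f_equal (fun f => f ord_max) E.
case: p q E E_last => [x|] [y|] E; rewrite /stereo /= ?unlift_none => E_last //.
- have sq_eq := ratio_inj _ _ (dotp_ge0 x) (dotp_ge0 y) E_last.
  congr Some; apply: functional_extensionality => k.
  have := f_equal (fun f => f (lift ord_max k)) E; rewrite /= liftK sq_eq.
  have := dotp_ge0 y => y_ge0 /div_eq_cross; nra.
- by case: (ratio_ne1 _ (dotp_ge0 x)).
- by case: (ratio_ne1 _ (dotp_ge0 y)).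
Qed.

(* The caps of two tangent balls meet in exactly one point, by injectivity of
   stereographic projection. *)
Lemma tangent_balls_touching_caps d (B1 B2 : hball d) c1 theta1 c2 theta2 :
  cap_of_ball B1 c1 theta1 -> cap_of_ball B2 c2 theta2 ->
  (exists! p, in_ball B1 p /\ in_ball B2 p) ->
  (exists y, in_cap c1 theta1 y /\ in_cap c2 theta2 y) /\
  (forall y y', in_cap c1 theta1 y -> in_cap c2 theta2 y ->
     in_cap c1 theta1 y' -> in_cap c2 theta2 y' -> y = y').
Proof.
move=> cap1 cap2 [p [[p_in1 p_in2] p_unique]]; split.
  by exists (stereo p); split; [apply/cap1 | apply/cap2]; exists p; split.
suff to_p y : in_cap c1 theta1 y -> in_cap c2 theta2 y -> y = stereo p.
  by move=> y y' y1 y2 y'1 y'2; rewrite (to_p y) // (to_p y').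
move=> /cap1 [q1 [q1_in ->]] /cap2 [q2 [q2_in /stereo_inj q_eq]].
by rewrite -q_eq in q2_in; congr stereo; apply: esym; apply: p_unique.
Qed.

Lemma polar_vertexE d (c : 'I_d.+1 -> R) theta :
  polar_vertex c theta = fun k => / cos theta * c k.
Proof. by apply: functional_extensionality => k; rewrite /polar_vertex /Rdiv Rmult_comm. Qed.

Lemma polar_vertex_norm d (c : 'I_d.+1 -> R) theta : on_sphere c -> cos theta <> 0 ->
  dotp (polar_vertex c theta) (polar_vertex c theta) = 1 + tan theta * tan theta.
Proof.
move=> c_unit cos_ne0; rewrite polar_vertexE dotp_scalel dotpC dotp_scalel c_unit /tan.
have := sin2_cos2 theta; rewrite /Rsqr => circle.
transitivity ((sin theta * sin theta + cos theta * cos theta) / (cos theta * cos theta)).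
  by rewrite circle; field.
by field.
Qed.

Lemma polar_vertex_dotp d (c1 c2 : 'I_d.+1 -> R) theta1 theta2 :
  cos theta1 <> 0 -> cos theta2 <> 0 -> dotp c1 c2 = cos (theta1 + theta2) ->
  dotp (polar_vertex c1 theta1) (polar_vertex c2 theta2) = 1 - tan theta1 * tan theta2.
Proof.
move=> cos1_ne0 cos2_ne0 c12.
rewrite !polar_vertexE dotp_scalel dotpC dotp_scalel dotpC c12 cos_plus /tan.
by field.
Qed.

Lemma tangent_polar_vertices d (d_pos : (0 < d)%nat) (B1 B2 : hball d) c1 theta1 c2 theta2 :
  on_sphere c1 -> on_sphere c2 -> 0 < theta1 < PI / 2 -> 0 < theta2 < PI / 2 ->
  cap_of_ball B1 c1 theta1 -> cap_of_ball B2 c2 theta2 ->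
  (exists! p, in_ball B1 p /\ in_ball B2 p) ->
  dotp (polar_vertex c1 theta1) (polar_vertex c2 theta2) = 1 - tan theta1 * tan theta2.
Proof.
move=> c1_unit c2_unit acute1 acute2 cap1 cap2 tangent12.
have [meet unique_point] := tangent_balls_touching_caps cap1 cap2 tangent12.
have [cos1_pos _] := acute_cos_sin acute1; have [cos2_pos _] := acute_cos_sin acute2.
apply: polar_vertex_dotp; try lra.
exact: (touching_caps_angle d_pos c1_unit c2_unit acute1 acute2 meet unique_point).
Qed.

Definition support_clique (V : Type) (adj : V -> V -> Prop) (x : V -> R) : Prop :=
  forall j l, x j <> 0 -> x l <> 0 -> j <> l -> adj j l.

Lemma equilibrium_dotp n m (v : 'I_n -> 'I_m -> R) (i : 'I_n) (x : 'I_n -> R)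
    (z : 'I_m -> R) :
  (forall k, \big[Rplus/0]_(j < n) (x j * (v j k - v i k)) = 0) ->
  \big[Rplus/0]_(j < n) (x j * (dotp (v j) z - dotp (v i) z)) = 0.
Proof.
move=> equilibrium.
have termE j : x j * (dotp (v j) z - dotp (v i) z)
    = \big[Rplus/0]_(k < m) (z k * (x j * (v j k - v i k))).
  have -> : dotp (v j) z - dotp (v i) z = dotp (fun k => 1 * v j k + (-1) * v i k) z.
    by rewrite dotp_linl; ring.
  by rewrite /dotp -rsumZ; apply: eq_bigr => k _; ring.
rewrite (eq_bigr _ (fun j _ => termE j)) exchange_big /=.
by rewrite big1 // => k _; rewrite rsumZ equilibrium; ring.
Qed.

Section StarEquilibrium.
Variables (n m : nat) (v : 'I_n -> 'I_m -> R) (t : 'I_n -> R) (adj : 'I_n -> 'I_n -> Prop).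
Hypothesis t_pos : forall j, 0 < t j.
Hypothesis v_norm : forall j, dotp (v j) (v j) = 1 + t j * t j.
Hypothesis v_adj : forall j l, adj j l -> dotp (v j) (v l) = 1 - t j * t l.
Variables (i : 'I_n) (x : 'I_n -> R).
Hypothesis x_star : forall j, x j <> 0 -> adj i j.
Hypothesis x_clique : support_clique adj x.
Hypothesis x_equilibrium :
  forall k, \big[Rplus/0]_(j < n) (x j * (v j k - v i k)) = 0.

Let S := \big[Rplus/0]_(j < n) (x j * t j).
Let P := \big[Rplus/0]_(j < n) x j.

Lemma star_balance : S + t i * P = 0.
Proof.
have termE j : x j * (dotp (v j) (v i) - dotp (v i) (v i))
    = - t i * (x j * t j + t i * x j).
  case: (Req_dec (x j) 0) => [->|xj_ne0]; first ring.
  by rewrite dotpC (v_adj (x_star xj_ne0)) v_norm; ring.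
have := equilibrium_dotp (v i) x_equilibrium.
rewrite (eq_bigr _ (fun j _ => termE j)) rsumZ rsumD rsumZ -/S -/P.
by case/Rmult_integral => //; have := t_pos i; lra.
Qed.

Lemma star_leaf l : x l <> 0 -> x l * t l = S.
Proof.
move=> xl_ne0.
have termE j : x j * (dotp (v j) (v l) - dotp (v i) (v l))
    = t l * (t i * x j + -1 * (x j * t j)) + (if j == l then 2 * x l * t l * t l else 0).
  rewrite (v_adj (x_star xl_ne0)).
  case: (Req_dec (x j) 0) => [xj0|xj_ne0].
    by case: eqP => [jl|_]; [rewrite jl in xj0 | rewrite xj0; ring].
  case: eqP => [->|jl]; first by rewrite v_norm; ring.
  by rewrite (v_adj (x_clique xj_ne0 xl_ne0 jl)); ring.
have := equilibrium_dotp (v l) x_equilibrium.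
rewrite (eq_bigr _ (fun j _ => termE j)) rsumD rsum_delta rsumZ rsumD rsumZ rsumZ -/S -/P.
have := star_balance; have := t_pos l => tl_pos balance leaf.
have : t l * (x l * t l - S) = 0 by nra.
by case/Rmult_integral; lra.
Qed.

Lemma star_stress_free j : x j = 0.
Proof.
(* sum_j x_j^2 t_j = S P = - t_i P^2 <= 0, while each term is >= 0 *)
have weighted : \big[Rplus/0]_(l < n) (x l * (x l * t l)) = S * P.
  rewrite /P -rsumZ; apply: eq_bigr => l _.
  case: (Req_dec (x l) 0) => [->|xl_ne0]; first ring.
  by rewrite star_leaf //; ring.
have term_ge0 l : 0 <= x l * (x l * t l) by have := t_pos l; nra.
have SP_le0 : S * P <= 0.
  have -> : S = - t i * P by have := star_balance; lra.
  by have := t_pos i; nra.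
have := rsum_term_le j term_ge0; rewrite weighted => term_le.
have : x j * x j * t j <= 0 * t j by rewrite Rmult_0_l -Rmult_assoc in term_le *; lra.
by move/(Rmult_le_reg_r _ _ _ (t_pos j)); nra.
Qed.
End StarEquilibrium.

Section StackedGraphs.
Local Close Scope R_scope.

Lemma stacked_graph_facets k m Fs adj : stacked_graph k m Fs adj ->
  (forall a b, adj a b -> a < m /\ b < m) /\
  (forall f, f \in Fs -> (forall a, a \in f -> a < m) /\
     (forall a b, a \in f -> b \in f -> a <> b -> adj a b)).
Proof.
elim=> [|m' Fs' adj' f _ [adj'_lt facets'] f_in]; last first.
  have [f_lt f_clique] := facets' f f_in.
  split.
    move=> a b [/adj'_lt [a_lt b_lt]|[[-> b_f]|[-> a_f]]].
    - by split; apply: ltnW.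
    - by split => //; apply/ltnW/f_lt.
    - by split => //; apply/ltnW/f_lt.
  move=> g; rewrite mem_cat => /orP [/mem_rem g_in|/mapP [u _ ->]].
    have [g_lt g_clique] := facets' g g_in.
    by split=> [a /g_lt /ltnW //|a b a_g b_g ab]; left; apply: g_clique.
  split=> [a|a b]; first by rewrite in_cons => /orP [/eqP -> //|/mem_rem /f_lt /ltnW].
  rewrite !in_cons => /orP [/eqP ->|/mem_rem a_f] /orP [/eqP ->|/mem_rem b_f] ab //.
  - by right; left.
  - by right; right.
  - by left; apply: f_clique.
split=> [a b [_ [a_le b_le]] //|f /mapP [j _ ->]].
split=> [a|a b]; first by rewrite mem_filter mem_iota add0n => /andP [_ /andP [_ ->]].
by rewrite !mem_filter !mem_iota !add0n => /andP [_ /andP [_ a_lt]] /andP [_ /andP [_ b_lt]].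
Qed.

(* The neighbourhood of the
   last glued vertex lies in a facet, hence is a clique, so x vanishes at that
   vertex; removing it leaves a smaller stacked graph. *)
Lemma stacked_graph_peel k m Fs adj : stacked_graph k m Fs adj ->
  forall x : nat -> nat -> R, (forall a b, x a b = x b a) ->
  (forall a b, x a b <> 0%R -> adj a b) ->
  (forall a, support_clique adj (x a) -> forall b, x a b = 0%R) ->
  forall a b, x a b = 0%R.
Proof.
elim=> [|m' Fs' adj' f stacked IH f_in] x x_sym x_adj x_local.
  by move=> a; apply: x_local => b b' /x_adj [_ [_ b_le]] /x_adj [_ [_ b'_le]].
have [adj'_lt facets'] := stacked_graph_facets stacked.
have [f_lt f_clique] := facets' f f_in.
have new_nbr_in_f b : x m' b <> 0%R -> b \in f.
  case/x_adj => [/adj'_lt [] | [[_ ->] // | [-> /f_lt]]]; by rewrite ltnn.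
have new_zero b : x m' b = 0%R.
  by apply: x_local => c c' /new_nbr_in_f c_f /new_nbr_in_f c'_f cc'; left; apply: f_clique.
apply: IH => [//|a b x_ne0|a a_local].
  case: (x_adj _ _ x_ne0) => [//|[[a_new _]|[b_new _]]].
  - by rewrite a_new new_zero in x_ne0.
  - by rewrite b_new x_sym new_zero in x_ne0.
by apply: x_local => c c' c_ne0 c'_ne0 cc'; left; apply: a_local.
Qed.
End StackedGraphs.

Lemma stacked_graph_peel_relabelled k n Fs adj (tg : 'I_n -> 'I_n -> Prop)
    (sigma : 'I_n -> 'I_n) :
  stacked_graph k n Fs adj -> bijective sigma ->
  (forall i j, tg i j <-> adj (val (sigma i)) (val (sigma j))) ->
  forall x : 'I_n -> 'I_n -> R, (forall i j, x i j = x j i) ->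
  (forall i j, x i j <> 0 -> tg i j) ->
  (forall i, support_clique tg (x i) -> forall j, x i j = 0) ->
  forall i j, x i j = 0.
Proof.
move=> stacked [g sigmaK gK] iso x x_sym x_tg x_local.
pose y a b := if insub a is Some ia then if insub b is Some ib then x (g ia) (g ib) else 0
  else 0.
have yE i j : y (val (sigma i)) (val (sigma j)) = x i j by rewrite /y !valK !sigmaK.
move=> i j; rewrite -yE; apply: (stacked_graph_peel stacked).
- by move=> a b; rewrite /y; case: insub => [ia|]; case: insub => [ib|].
- move=> a b; rewrite /y; case: (insubP _ a) => [ia _ <-|_]; last by [].
  case: (insubP _ b) => [ib _ <-|_]; last by [].
  by move/x_tg/iso; rewrite !gK.
- move=> a a_local b; rewrite /y; case: (insubP _ a) => [ia _ Ea|_]; last by [].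
  case: (insubP _ b) => [ib _ _|_]; last by [].
  subst a; apply: x_local => j1 j2 x_j1 x_j2 j12; apply/iso; apply: a_local.
  + by rewrite /y !valK sigmaK.
  + by rewrite /y !valK sigmaK.
  + by move/val_inj/(can_inj sigmaK).
Qed.

Close Scope R_scope.

Theorem theorem5p5 (d : nat) (hd : (2 <= d)%N)
  (n : nat) (Fs : seq (seq nat)) (adj : nat -> nat -> Prop)
  (Hstacked : stacked_graph d.+1 n Fs adj)
  (B : 'I_n -> hball d) (Hpack : is_packing B)
  (sigma : 'I_n -> 'I_n) (Hsigma : bijective sigma)
  (Hiso : forall i j, tangent B i j <-> adj (val (sigma i)) (val (sigma j)))
  (c : 'I_n -> 'I_d.+1 -> R) (theta : 'I_n -> R)
  (Hc : forall i, on_sphere (c i))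
  (Htheta : forall i, (0 < theta i < PI / 2)%R)
  (Hcap : forall i, cap_of_ball (B i) (c i) (theta i))
  (T : 'I_n -> 'I_n -> R)
  (Tsym : forall i j, T i j = T j i)
  (Tedge : forall i j, T i j <> 0%R -> tangent B i j)
  (Hstress : forall (i : 'I_n) (k : 'I_d.+1),
     \big[Rplus/0%R]_(j < n)
        (T i j * (polar_vertex (c j) (theta j) k - polar_vertex (c i) (theta i) k))%R
     = 0%R) :
  forall i j, T i j = 0%R.
Proof.
have d_pos : (0 < d)%nat by apply: leq_trans hd.
pose v j := polar_vertex (c j) (theta j).
pose t j := tan (theta j).
have t_pos j : (0 < t j)%R.
  by have [cos_pos [sin_pos _]] := acute_cos_sin (Htheta j); apply: Rdiv_lt_0_compat.
have v_norm j : dotp (v j) (v j) = (1 + t j * t j)%R.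
  by have [cos_pos _] := acute_cos_sin (Htheta j); apply: polar_vertex_norm; [|lra].
have v_tangent j l : tangent B j l -> dotp (v j) (v l) = (1 - t j * t l)%R.
  by case=> _ touching; apply: tangent_polar_vertices.
apply: (stacked_graph_peel_relabelled Hstacked Hsigma Hiso Tsym Tedge) => i T_clique j.
exact: (star_stress_free t_pos v_norm v_tangent (Tedge i) T_clique (Hstress i)).
Qed.
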